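(* For each $n\ge1$ there exist $N\ge1$, rational numbers $a_1,\dots,a_N\in\mathbb{Q}$ and integer valued positive definite quadratic forms $Q_1,\dots,Q_N$ on $\mathbb{Z}^n$ such that \[ \Theta_n(q)=\sum_{i=1}^N a_i\,\Theta_{Q_i}(q), \] where $\Theta_n(q)=\sum_{(k_1,\dots,k_n)\in\mathbb{Z}^n}q^{\sum_{1\le i\le j\le n}k_ik_j}e^{\frac{2\pi\sqrt{-1}}{n+2}(k_1+2k_2+\cdots+nk_n)}$ and, for a quadratic form $Q$, $\Theta_Q(q)=\sum_{(k_1,\dots,k_n)\in\mathbb{Z}^n}q^{Q(k_1,\dots,k_n)}$.
   Context: An integer valued positive definite quadratic form on $\mathbb{Z}^n$ is a quadratic form $Q$ with $Q(\mathbb{Z}^n)\subset\mathbb{Z}$ whose real extension is positive definite. *)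

From HB Require Import structures.
From mathcomp Require Import all_boot all_order all_algebra.
From mathcomp Require Import all_classical all_reals.
From mathcomp Require Import trigo.
From mathcomp Require Import complex.

Set Implicit Arguments.
Unset Strict Implicit.
Unset Printing Implicit Defensive.

Import Order.TTheory GRing.Theory Num.Theory.
Local Open Scope ring_scope.
Local Open Scope classical_set_scope.

Definition qform (R : realType) (n : nat) (A : 'M[R]_n) (x : 'rV[R]_n) : R :=
  (x *m A *m x^T) 0 0.

Definition zvec (R : realType) (n : nat) (k : 'rV[int]_n) : 'rV[R]_n :=
  map_mx (fun z : int => z%:~R) k.

Definition int_valued_posdef (R : realType) (n : nat) (A : 'M[R]_n) : Prop :=
  (forall k : 'rV[int]_n, exists z : int, qform A (zvec R k) = z%:~R) /\
  (forall x : 'rV[R]_n, x != 0 -> 0 < qform A x).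

(* coefficient of q^m in Theta_Q(q) = sum_{k in Z^n} q^{Q(k)}, i.e. the number
   of k in Z^n with Q(k) = m (a finite set since Q is positive definite),
   viewed in the complex numbers R[i]. *)
Definition thetaQ_coef (R : realType) (n : nat) (A : 'M[R]_n) (m : nat) : R[i] :=
  \sum_(k \in [set k : 'rV[int]_n | qform A (zvec R k) = m%:R]) (1 : R[i]).

Definition Qn (n : nat) (k : 'rV[int]_n) : int :=
  \sum_(i < n) \sum_(j < n | (i <= j)%N) k 0 i * k 0 j.

Definition zeta (R : realType) (n : nat) : R[i] :=
  (cos (2 * pi / (n.+2)%:R) +i* sin (2 * pi / (n.+2)%:R))%C.

Definition lin_n (n : nat) (k : 'rV[int]_n) : int :=
  \sum_(i < n) (i.+1)%:Z * k 0 i.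

(* coefficient of q^m in Theta_n(q) *)
Definition thetan_coef (R : realType) (n : nat) (m : nat) : R[i] :=
  \sum_(k \in [set k : 'rV[int]_n | Qn k = m%:Z]) (zeta R n) ^ (lin_n k).

From HB Require Import structures.
From mathcomp Require Import all_boot all_order all_algebra.
From mathcomp Require Import all_classical all_reals.
From mathcomp Require Import trigo.
From mathcomp Require Import complex.
From mathcomp Require Import ring lra zify.
From mathcomp Require Import fingroup perm.
Set Implicit Arguments.
Unset Strict Implicit.
Unset Printing Implicit Defensive.

Import Order.TTheory GRing.Theory Num.Theory.
Local Open Scope ring_scope.

(* Let N = n + 2 and z = exp(2 pi i / N).  Sending k to the point
   x = (0, -(k_1 + ... + k_n), k_1, ..., k_n) of the root lattice A_(n+1) turns
   the exponent of z into sum_t t x_t and Q_n into |x|^2 / 2.  For u coprime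
   to N, permuting the coordinates of x by t |-> u t mod N preserves the
   lattice and the norm and multiplies the exponent by u modulo N.  Averaging
   over these u replaces z^(lin k) by the Ramanujan sum
   c_N(lin k) = sum_(d | N) mu(d) (N/d) [N/d divides lin k], and the k with
   Q_n k = m and e | lin k are counted by the theta series of Q_n restricted
   to the sublattice {k | e divides lin k}, an integral positive definite
   form. *)

Lemma sum_expr_unity (F : idomainType) (w : F) M : w ^+ M = 1 ->
  \sum_(j < M) w ^+ j = if w == 1 then M%:R else 0.
Proof.
move=> wM; case: eqVneq => [->|w_neq1].
  by rewrite (eq_bigr (fun _ => 1)) ?sumr_const ?card_ord // => j _; rewrite expr1n.
apply/eqP; have := subrX1 w M; rewrite wM subrr => /esym/eqP.
by rewrite mulf_eq0 subr_eq0 (negbTE w_neq1).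
Qed.

Lemma sum_ord_dvdn (V : nmodType) (f : nat -> V) e M : (0 < e)%N ->
  \sum_(u < e * M | (e %| u)%N) f u = \sum_(j < M) f (e * j)%N.
Proof.
move=> e_gt0; rewrite -(big_mkord (fun u => e %| u)%N).
elim: M => [|M IH]; first by rewrite muln0 big_ord0 big_geq.
rewrite big_ord_recr /= -IH (big_cat_nat _ (n := (e * M)%N)) ?leq_pmul2l //=.
congr (_ + _); rewrite big_ltn_cond ?ltn_pmul2l // dvdn_mulr //.
rewrite big_nat_cond big1 ?addr0 // => u /andP[/andP[ltMu ltuM] /dvdnP[q u_eq]].
move: ltMu ltuM; rewrite u_eq [(q * e)%N]mulnC !ltn_pmul2l // ltnS.
by move=> /leq_trans/[apply]; rewrite ltnn.
Qed.

(* The Moebius function, defined by the recursion [\sum_(e %| d) moebius e = (d == 1)]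
   with [d] itself as fuel. *)
Fixpoint moebius_rec (fuel d : nat) : int :=
  if fuel is fuel'.+1 then
    (d == 1)%:Z - \sum_(i < d.-1 | (i.+1 %| d)%N) moebius_rec fuel' i.+1
  else 0.

Definition moebius (d : nat) : int := moebius_rec d d.

Lemma moebius_rec_stable fuel1 fuel2 d : (d <= fuel1)%N -> (d <= fuel2)%N ->
  moebius_rec fuel1 d = moebius_rec fuel2 d.
Proof.
elim: fuel1 fuel2 d => [|fuel1 IH] [|fuel2] [|d] //= le_d1 le_d2;
  rewrite ?big_ord0 ?subr0 //.
congr (_ - _); apply: eq_bigr => i _.
by apply: IH; apply: leq_trans (ltn_ord i) _.
Qed.

Lemma sum_moebius_dvdn g K : (0 < g)%N -> (g <= K)%N ->
  \sum_(i < K | (i.+1 %| g)%N) moebius i.+1 = (g == 1)%:Z.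
Proof.
move=> g_gt0 le_gK.
rewrite (eq_bigl (fun i : 'I_K => (i.+1 %| g) && (i < g))%N); last first.
  by move=> i; case: (boolP (i.+1 %| g)%N) => // /(dvdn_leq g_gt0).
rewrite -(big_ord_widen_cond K (fun i => i.+1 %| g)%N (fun i => moebius i.+1) le_gK).
case: g g_gt0 {le_gK} => // g _.
rewrite big_mkcond big_ord_recr /= dvdnn -big_mkcond /= {2}/moebius /=.
rewrite addrC [X in _ + X](eq_bigr (fun i : 'I_g => moebius_rec g i.+1)) ?subrK // => i _.
by apply: moebius_rec_stable.
Qed.

Section PrimitiveRootIntPowers.
Variables (F : fieldType) (N : nat) (z : F).
Hypothesis z_prim : N.-primitive_root z.

Let N_gt0 : (0 < N)%N := prim_order_gt0 z_prim.
Let z_neq0 : z != 0.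
Proof. by rewrite (prim_root_eq0 z_prim) -lt0n. Qed.

Lemma prim_exprz_mod (a : int) : z ^ a = z ^+ `|(a %% N)%Z|.
Proof.
rewrite {1}(divz_eq a N) expfzDr // [(_ %/ _)%Z * _]mulrC -exprz_exp.
rewrite -exprnP (prim_expr_order z_prim) exp1rz mul1r.
by rewrite -{1}(gez0_abs (modz_ge0 a _)) ?eqz_nat -?lt0n.
Qed.

Lemma prim_exprz_congr (a b : int) : (a = b %[mod N])%Z -> z ^ a = z ^ b.
Proof. by rewrite !prim_exprz_mod => ->. Qed.

Lemma prim_exprz_eq1 (a : int) : (z ^ a == 1) = (N %| a)%Z.
Proof.
have r_ge0 : 0 <= (a %% N)%Z by rewrite modz_ge0 // eqz_nat -lt0n.
have r_ltN : (`|(a %% N)%Z| < N)%N by rewrite -ltz_nat gez0_abs ?ltz_pmod.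
rewrite prim_exprz_mod -(expr0 z) (eq_prim_root_expr z_prim) mod0n modn_small //.
by rewrite absz_eq0; apply/eqP/dvdz_mod0P.
Qed.

Lemma sum_prim_exprz_dvdn e (r : int) : (0 < e)%N -> (e %| N)%N ->
  \sum_(u < N | (e %| u)%N) z ^ (u%:Z * r) =
  if ((N %/ e)%:Z %| r)%Z then (N %/ e)%:R else 0.
Proof.
move=> e_gt0 e_dvdN; set M := (N %/ e)%N.
have N_eM : N = (e * M)%N by rewrite mulnC divnK.
have e_neq0 : e%:Z != 0 by rewrite eqz_nat -lt0n.
set w := z ^ (e%:Z * r).
have -> : \sum_(u < N | (e %| u)%N) z ^ (u%:Z * r) = \sum_(j < M) w ^+ j.
  rewrite N_eM (@sum_ord_dvdn _ (fun u => z ^ (u%:Z * r))) //; apply: eq_bigr => j _.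
  by rewrite exprnP exprz_exp PoszM mulrAC.
have wM : w ^+ M = 1.
  apply/eqP; rewrite exprnP exprz_exp prim_exprz_eq1 mulrAC -PoszM -N_eM.
  exact: dvdz_mulr.
have w_eq1 : (w == 1) = (M%:Z %| r)%Z.
  by rewrite prim_exprz_eq1 N_eM PoszM dvdz_mul2l.
by rewrite sum_expr_unity // w_eq1.
Qed.

Lemma ramanujan_sum (r : int) :
  \sum_(u < N | coprime u N) z ^ (u%:Z * r) =
  \sum_(i < N | (i.+1 %| N)%N) (moebius i.+1)%:~R *
     (if ((N %/ i.+1)%:Z %| r)%Z then (N %/ i.+1)%:R else 0).
Proof.
have coprime_moebius (u : 'I_N) : (if coprime u N then z ^ (u%:Z * r) else 0) =
    \sum_(i < N | (i.+1 %| u)%N && (i.+1 %| N)%N) (moebius i.+1)%:~R * z ^ (u%:Z * r).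
  rewrite -mulr_suml -rmorph_sum /=.
  under eq_bigl do rewrite -dvdn_gcd.
  rewrite sum_moebius_dvdn ?gcdn_gt0 ?N_gt0 ?orbT //; last first.
    by apply: dvdn_leq => //; exact: dvdn_gcdr.
  by rewrite /coprime; case: eqP; rewrite ?mul1r ?mul0r.
rewrite big_mkcond; under eq_bigr do rewrite coprime_moebius big_mkcond.
rewrite exchange_big [RHS]big_mkcond; apply: eq_bigr => i _ /=.
case: (boolP (i.+1 %| N)%N) => [i_dvdN | _]; last by rewrite big1 // => u _; rewrite andbF.
rewrite -sum_prim_exprz_dvdn // mulr_sumr big_mkcond.
by rewrite [RHS]big_mkcond; apply: eq_bigr => u _; rewrite andbT.
Qed.

End PrimitiveRootIntPowers.

Section Zeta.
Variable R : realType.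

Definition expi (x : R) : R[i] := (cos x +i* sin x)%C.

Lemma expiD x y : expi x * expi y = expi (x + y).
Proof. by rewrite /expi sinD cosD; simpc; congr (_ +i* _)%C; ring. Qed.

Lemma expiMn x k : expi x ^+ k = expi (k%:R * x).
Proof.
elim: k => [|k IH]; first by rewrite mul0r /expi cos0 sin0.
by rewrite exprS IH expiD mulrSr mulrDl mul1r addrC.
Qed.

Lemma cos_lt1 (x : R) : 0 < x < pi *+ 2 -> cos x < 1.
Proof.
move=> /andP[x_gt0 x_lt2pi]; have pi_gt0 := pi_gt0 R.
case: (lerP x pi) => [x_lepi | pi_ltx].
  by rewrite -cos0 ltr_cos // in_itv /=; apply/andP; split; lra.
have -> : cos x = cos (pi *+ 2 - x) by rewrite cosB cos2pi sin2pi mul1r mul0r addr0.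
by rewrite -cos0 ltr_cos; [lra | |]; rewrite in_itv /=; apply/andP; split; lra.
Qed.

Lemma zeta_prim_root n : n.+2.-primitive_root (zeta R n).
Proof.
set th := (2 * pi / n.+2%:R : R).
have zetaX k : zeta R n ^+ k = expi (k%:R * th) by rewrite -expiMn.
have th_gt0 : 0 < th by rewrite divr_gt0 ?mulr_gt0 ?pi_gt0 ?ltr0n.
have Nth : n.+2%:R * th = pi *+ 2.
  by rewrite /th mulrCA divff ?mulr1 ?pnatr_eq0 // mulr_natl.
have zetaN : zeta R n ^+ n.+2 = 1 by rewrite zetaX Nth /expi cos2pi sin2pi.
have [m m_prim m_dvdN] := prim_order_exists (ltn0Sn _) zetaN.
suff m_eqN : m = n.+2 by rewrite -m_eqN.
have m_gt0 := prim_order_gt0 m_prim.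
have := dvdn_leq (ltn0Sn _) m_dvdN; rewrite leq_eqVlt => /orP[/eqP // | m_ltN].
have : cos (m%:R * th) < 1.
  by apply: cos_lt1; rewrite mulr_gt0 ?ltr0n //= -Nth ltr_pM2r // ltr_nat.
have /(congr1 (@complex.Re R)) := prim_expr_order m_prim.
by rewrite zetaX /= => ->; rewrite ltxx.
Qed.

End Zeta.

Lemma double_sum_le_pairs (S : comRingType) m (x : 'I_m -> S) :
  2 * (\sum_(i < m) \sum_(j < m | (i <= j)%N) x i * x j) =
  \sum_(i < m) x i ^+ 2 + (\sum_(i < m) x i) ^+ 2.
Proof.
pose D := \sum_(i < m) x i ^+ 2.
pose U := \sum_(i < m) \sum_(j < m | (i < j)%N) x i * x j.
have le_pairs : \sum_(i < m) \sum_(j < m | (i <= j)%N) x i * x j = D + U.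
  rewrite -big_split; apply: eq_bigr => i _ /=.
  rewrite (bigD1 i) ?leqnn //= expr2; congr (_ + _).
  by apply: eq_bigl => j; rewrite ltn_neqAle eq_sym andbC.
have gt_pairs : \sum_(i < m) \sum_(j < m | ~~ (i <= j)%N) x i * x j = U.
  under eq_bigr do rewrite big_mkcond; rewrite exchange_big /=.
  apply: eq_bigr => j _; rewrite [RHS]big_mkcond.
  by apply: eq_bigr => i _; rewrite -ltnNge; case: ifP => //; rewrite mulrC.
have -> : (\sum_(i < m) x i) ^+ 2 = D + U + U.
  rewrite expr2 mulr_suml -le_pairs -gt_pairs -big_split /=.
  by apply: eq_bigr => i _; rewrite mulr_sumr (bigID (fun j : 'I_m => i <= j)%N).
by rewrite le_pairs -/D; ring.
Qed.

Section RootCoordinates.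
Variable n : nat.
Local Notation N := n.+2.

(* [k] is sent to the point [(0, -(k_1 + ... + k_n), k_1, ..., k_n)] of the
   root lattice [A_(n+1)] in [Z^N]: there [Qn] is half the squared norm and
   [lin_n] is the pairing with [(0, 1, ..., N - 1)]. *)
Definition root_coords (k : 'rV[int]_n) (t : 'I_N) : int :=
  match unlift ord0 t with
  | None => 0
  | Some t' => if unlift ord0 t' is Some j then k 0 j else - \sum_(j < n) k 0 j
  end.

Definition of_root_coords (x : 'I_N -> int) : 'rV[int]_n :=
  \row_j x (lift ord0 (lift ord0 j)).

Lemma big_ord_recl2 (V : nmodType) (F : 'I_N -> V) :
  \sum_(t < N) F t = F ord0 + F (lift ord0 ord0) + \sum_(j < n) F (lift ord0 (lift ord0 j)).
Proof. by rewrite big_ord_recl big_ord_recl addrA. Qed.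

Lemma root_coords0 k : root_coords k ord0 = 0.
Proof. by rewrite /root_coords unlift_none. Qed.

Lemma root_coords1 k : root_coords k (lift ord0 ord0) = - \sum_(j < n) k 0 j.
Proof. by rewrite /root_coords liftK unlift_none. Qed.

Lemma root_coords_lift k j : root_coords k (lift ord0 (lift ord0 j)) = k 0 j.
Proof. by rewrite /root_coords !liftK. Qed.

Lemma sum_root_coords k : \sum_(t < N) root_coords k t = 0.
Proof.
rewrite big_ord_recl2 root_coords0 root_coords1 add0r.
by under [X in _ + X]eq_bigr do rewrite root_coords_lift; rewrite addNr.
Qed.

Lemma sum_root_coords_sqr k : \sum_(t < N) root_coords k t ^+ 2 = 2 * Qn k.
Proof.
rewrite big_ord_recl2 root_coords0 root_coords1.
under [X in _ + X]eq_bigr do rewrite root_coords_lift.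
by rewrite /Qn double_sum_le_pairs expr0n add0r sqrrN addrC.
Qed.

Lemma lin_n_root_coords k : lin_n k = \sum_(t < N) (t : nat)%:Z * root_coords k t.
Proof.
rewrite big_ord_recl2 root_coords0 root_coords1 mul0r add0r mul1r.
under [X in _ = _ + X]eq_bigr do rewrite root_coords_lift /= /bump /= !add1n.
under [X in _ = _ + X]eq_bigr do rewrite -addn1 PoszD mulrDl mul1r.
by rewrite big_split /= addrCA addNr addr0.
Qed.

Lemma root_coordsK : cancel root_coords of_root_coords.
Proof. by move=> k; apply/matrixP => i j; rewrite mxE root_coords_lift (ord1 i). Qed.

Lemma of_root_coordsK (x : 'I_N -> int) : x ord0 = 0 -> \sum_(t < N) x t = 0 ->
  root_coords (of_root_coords x) =1 x.
Proof.
move=> x0 sum_x0 t; case: (unliftP ord0 t) => [t'|] ->; last by rewrite root_coords0.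
case: (unliftP ord0 t') => [j|] ->; first by rewrite root_coords_lift mxE.
rewrite root_coords1; under eq_bigr do rewrite mxE.
move: sum_x0; rewrite big_ord_recl2 x0 add0r => /eqP.
by rewrite addrC addr_eq0 => /eqP ->; rewrite opprK.
Qed.

End RootCoordinates.

Lemma sum_perm (V : nmodType) m (q : {perm 'I_m}) (F : 'I_m -> V) :
  \sum_(i < m) F (q i) = \sum_(i < m) F i.
Proof. by rewrite [RHS](reindex_perm q). Qed.

Section CoordinatePermutations.
Variable n : nat.
Local Notation N := n.+2.
Implicit Types (q : {perm 'I_N}) (k : 'rV[int]_n).

Definition perm_coords q k : 'rV[int]_n := of_root_coords (root_coords k \o q).

Lemma root_coords_perm q k : q ord0 = ord0 ->
  root_coords (perm_coords q k) =1 root_coords k \o q.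
Proof.
move=> q0; apply: of_root_coordsK; first by rewrite /= q0 root_coords0.
by rewrite /= sum_perm sum_root_coords.
Qed.

Lemma perm_coordsK q : q ord0 = ord0 -> cancel (perm_coords q) (perm_coords q^-1).
Proof.
move=> q0 k; have qV0 : (q^-1)%g ord0 = ord0 by rewrite -{1}q0 permK.
rewrite /perm_coords -[RHS]root_coordsK; congr of_root_coords; apply/funext => t /=.
by rewrite root_coords_perm //= permKV.
Qed.

Lemma Qn_perm_coords q k : q ord0 = ord0 -> Qn (perm_coords q k) = Qn k.
Proof.
move=> q0; apply: (@mulfI _ 2) => //; rewrite -!sum_root_coords_sqr.
under eq_bigr do rewrite root_coords_perm //=.
by rewrite (sum_perm q (fun t => root_coords k t ^+ 2)).
Qed.

Lemma lin_n_perm_coords q k : q ord0 = ord0 ->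
  lin_n (perm_coords q k) = \sum_(t < N) ((q^-1)%g t : nat)%:Z * root_coords k t.
Proof.
move=> q0; rewrite lin_n_root_coords; under eq_bigr do rewrite root_coords_perm //=.
rewrite -(sum_perm q^-1); apply: eq_bigr => t _; by rewrite permKV.
Qed.

Definition mul_ord (u : nat) (t : 'I_N) : 'I_N := inZp (u * t).

Lemma mul_ord_inj u : coprime u N -> injective (mul_ord u).
Proof.
move=> u_coprime t s /(congr1 val) /= /eqP eq_uts; apply/val_inj/eqP => /=.
wlog le_st : t s eq_uts / (s <= t)%N.
  move=> wlog_ts; case/orP: (leq_total s t) => [/wlog_ts-> // | le_ts].
  by rewrite eq_sym wlog_ts // eq_sym.
move: eq_uts; rewrite eqn_mod_dvd ?leq_mul2l ?le_st ?orbT // -mulnBr.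
rewrite Gauss_dvdr 1?coprime_sym // eqn_leq le_st andbT -subn_eq0.
case: posnP => // ts_gt0 /(dvdn_leq ts_gt0); rewrite leqNgt => /negP[].
exact: leq_ltn_trans (leq_subr _ _) (ltn_ord t).
Qed.

Definition mul_perm u (u_coprime : coprime u N) : {perm 'I_N} :=
  perm (mul_ord_inj u_coprime).

Lemma mul_perm0 u (u_coprime : coprime u N) : mul_perm u_coprime ord0 = ord0.
Proof. by apply/val_inj; rewrite permE /= muln0 mod0n. Qed.

Lemma lin_n_mul_perm u (u_coprime : coprime u N) k :
  (lin_n (perm_coords (mul_perm u_coprime)^-1 k) = u%:Z * lin_n k %[mod N])%Z.
Proof.
have qV0 : ((mul_perm u_coprime)^-1)%g ord0 = ord0.
  by rewrite -{1}(mul_perm0 u_coprime) permK.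
apply/eqP; rewrite lin_n_perm_coords // invgK lin_n_root_coords mulr_sumr.
rewrite eqz_mod_dvd -sumrB rpred_sum // => t _.
rewrite mulrA -mulrBl dvdz_mulr // permE /= -PoszM {2}(divn_eq (u * t) N).
by rewrite PoszD opprD addrCA subrr addr0 rpredN PoszM dvdz_mull.
Qed.

End CoordinatePermutations.

Section LevelSets.
Variable n : nat.
Local Notation N := n.+2.
Implicit Types k : 'rV[int]_n.

Local Open Scope classical_set_scope.

Lemma perm_coords_bij (q : {perm 'I_N}) m : q ord0 = ord0 ->
  set_bij [set k | Qn k = m%:Z] [set k | Qn k = m%:Z] (perm_coords q).
Proof.
move=> q0; have qV0 : (q^-1)%g ord0 = ord0 by rewrite -{1}q0 permK.
split.
- by move=> k /= Qk; rewrite Qn_perm_coords.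
- by move=> k1 k2 _ _ /(congr1 (perm_coords q^-1)); rewrite !(perm_coordsK q0).
- move=> k /= Qk; exists (perm_coords q^-1 k); first by rewrite /= Qn_perm_coords.
  by rewrite -{1}[q]invgK (perm_coordsK qV0).
Qed.

Lemma Qn_coord_le k m (j : 'I_n) : Qn k = m%:Z -> (`|k 0%R j| <= 2 * m)%N.
Proof.
move=> Qk; have : root_coords k (lift ord0 (lift ord0 j)) ^+ 2 <= 2 * Qn k.
  rewrite -sum_root_coords_sqr (bigD1 (lift ord0 (lift ord0 j))) //= lerDl.
  by apply: sumr_ge0 => t _; rewrite sqr_ge0.
rewrite root_coords_lift Qk expr2; nia.
Qed.

Lemma finite_Qn_level m : finite_set [set k : 'rV[int]_n | Qn k = m%:Z].
Proof.
pose shift (y : 'rV['I_(4 * m).+1]_n) : 'rV[int]_n :=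
  \row_j ((y 0 j : nat)%:Z - (2 * m)%N%:Z).
apply: (sub_finite_set (B := shift @` setT)); last exact/finite_image/finite_finset.
move=> k /= Qk; exists (\row_j inord `|k 0%R j + (2 * m)%N%:Z|) => //.
apply/matrixP => i j; rewrite !mxE (ord1 i).
have le_kj := Qn_coord_le j Qk.
by rewrite inordK ?gez0_abs ?addrK //; lia.
Qed.

Lemma sum_Qn_level_exprz_mul (F : fieldType) (z : F) u m :
    N.-primitive_root z -> coprime u N ->
  \sum_(k \in [set k : 'rV[int]_n | Qn k = m%:Z]) z ^ (u%:Z * lin_n k) =
  \sum_(k \in [set k : 'rV[int]_n | Qn k = m%:Z]) z ^ lin_n k.
Proof.
move=> z_prim u_coprime; set q := ((mul_perm u_coprime)^-1)%g.
have q0 : q ord0 = ord0 by rewrite -{1}(mul_perm0 u_coprime) permK.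
rewrite (reindex_fsbig _ _ _ (fun k => z ^ lin_n k) (perm_coords_bij m q0)).
by apply: eq_fsbigr => k _; apply/esym/(prim_exprz_congr z_prim)/lin_n_mul_perm.
Qed.

End LevelSets.

Definition upper_ones (S : pzRingType) m : 'M[S]_m := \matrix_(i, j) ((i <= j)%N)%:R.

Lemma qform_upper_ones (R : realType) m (x : 'rV[R]_m) :
  qform (upper_ones R m) x = \sum_(i < m) \sum_(j < m | (i <= j)%N) x 0 i * x 0 j.
Proof.
rewrite /qform mxE; under eq_bigr do rewrite !mxE mulr_suml.
under eq_bigr do under eq_bigr do rewrite !mxE.
rewrite exchange_big /=; apply: eq_bigr => i _; rewrite [RHS]big_mkcond /=.
by apply: eq_bigr => j _; case: (i <= j)%N; rewrite ?mulr1 ?mulr0 ?mul0r.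
Qed.

Lemma qform_upper_ones_zvec (R : realType) m (k : 'rV[int]_m) :
  qform (upper_ones R m) (zvec R k) = (Qn k)%:~R.
Proof.
rewrite qform_upper_ones /Qn rmorph_sum; apply: eq_bigr => i _.
by rewrite rmorph_sum; apply: eq_bigr => j _; rewrite !mxE rmorphM.
Qed.

Lemma qform_upper_ones_gt0 (R : realType) m (x : 'rV[R]_m) :
  x != 0 -> 0 < qform (upper_ones R m) x.
Proof.
move=> x_neq0; have [i xi_neq0] : exists i, x 0 i != 0.
  apply/existsP; apply: contraR x_neq0 => /existsPn x0.
  by apply/eqP/matrixP => a b; rewrite (ord1 a) mxE; exact/eqP/negbNE/x0.
have double_Q := double_sum_le_pairs (fun j => x 0 j).
have le_sqr : x 0 i ^+ 2 <= \sum_(j < m) x 0 j ^+ 2.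
  by rewrite (bigD1 i) //= lerDl; apply: sumr_ge0 => j _; exact: sqr_ge0.
have := sqr_ge0 (\sum_(j < m) x 0 j).
have : 0 < x 0 i ^+ 2 by rewrite exprn_even_gt0.
rewrite qform_upper_ones; lra.
Qed.

Section DvdLinSublattice.
Variable n : nat.
Local Notation M := n.+1.

(* Its rows [d e_0] and [e_i - (i + 1) e_0] (for [i > 0]) form a basis of the
   sublattice [{k | d divides lin_n k}] of [Z^M]. *)
Definition dvd_lin_basis (S : pzRingType) (d : nat) : 'M[S]_M :=
  \matrix_(i, j) if j == ord0 then (if i == ord0 then d%:R else - (i.+1)%:R)
                 else (i == j)%:R.

Definition dvd_lin_form (R : realType) d : 'M[R]_M :=
  dvd_lin_basis R d *m upper_ones R M *m (dvd_lin_basis R d)^T.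

Lemma qform_dvd_lin_form (R : realType) d (x : 'rV[R]_M) :
  qform (dvd_lin_form R d) x = qform (upper_ones R M) (x *m dvd_lin_basis R d).
Proof. by rewrite /qform /dvd_lin_form trmx_mul !mulmxA. Qed.

Lemma zvec_mul_dvd_lin_basis (R : realType) d (y : 'rV[int]_M) :
  zvec R y *m dvd_lin_basis R d = zvec R (y *m dvd_lin_basis int d).
Proof.
rewrite /zvec map_mxM; congr (_ *m _); apply/matrixP => i j; rewrite !mxE.
by case: ifP => _; [case: ifP => _; rewrite ?rmorphN rmorph_nat | rewrite rmorph_nat].
Qed.

Lemma mul_dvd_lin_basisE (S : comPzRingType) d (x : 'rV[S]_M) j :
  (x *m dvd_lin_basis S d) 0 j =
  if j == ord0 then d%:R * x 0 ord0 - \sum_(i < M | i != ord0) (i.+1)%:R * x 0 i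
  else x 0 j.
Proof.
rewrite mxE; case: ifP => j0.
  rewrite (bigD1 ord0) //= !mxE j0 eqxx mulrC; congr (_ + _).
  rewrite -sumrN; apply: eq_bigr => i /negbTE i0.
  by rewrite mxE j0 i0 mulrN mulrC.
rewrite (bigD1 j) //= big1 ?addr0; first by rewrite mxE j0 eqxx mulr1.
by move=> i /negbTE ij; rewrite mxE j0 ij mulr0.
Qed.

Lemma mul_dvd_lin_basis_eq0 (S : numDomainType) d (x : 'rV[S]_M) : (0 < d)%N ->
  (x *m dvd_lin_basis S d == 0) = (x == 0).
Proof.
move=> d_gt0; apply/eqP/eqP => [xB0 | ->]; last by rewrite mul0mx.
have x_nz j : j != ord0 -> x 0 j = 0.
  by move=> j0; have := mul_dvd_lin_basisE d x j; rewrite (negbTE j0) xB0 mxE.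
have := mul_dvd_lin_basisE d x ord0; rewrite eqxx xB0 mxE big1; last first.
  by move=> i i0; rewrite x_nz // mulr0.
move/esym/eqP; rewrite subr0 mulf_eq0 pnatr_eq0 (gtn_eqF d_gt0) /= => /eqP x00.
apply/matrixP => a j; rewrite (ord1 a) mxE.
by case: (j =P ord0) => [-> | /eqP]; [exact: x00 | exact: x_nz].
Qed.

Lemma lin_nE (k : 'rV[int]_M) :
  lin_n k = k 0 ord0 + \sum_(i < M | i != ord0) (i.+1)%:R * k 0 i.
Proof.
rewrite /lin_n (bigD1 ord0) //= mul1r; congr (_ + _).
by apply: eq_bigr => i _; rewrite natz.
Qed.

Lemma lin_n_mul_dvd_lin_basis d (y : 'rV[int]_M) :
  lin_n (y *m dvd_lin_basis int d) = d%:Z * y 0 ord0.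
Proof.
rewrite lin_nE mul_dvd_lin_basisE eqxx.
under [X in _ + X]eq_bigr => i i0 do rewrite mul_dvd_lin_basisE (negbTE i0).
by rewrite subrK natz.
Qed.

Lemma qform_dvd_lin_form_zvec (R : realType) d (y : 'rV[int]_M) :
  qform (dvd_lin_form R d) (zvec R y) = (Qn (y *m dvd_lin_basis int d))%:~R.
Proof.
by rewrite qform_dvd_lin_form zvec_mul_dvd_lin_basis qform_upper_ones_zvec.
Qed.

Lemma dvd_lin_form_posdef (R : realType) d : (0 < d)%N ->
  int_valued_posdef (dvd_lin_form R d).
Proof.
move=> d_gt0; split=> [y | x x_neq0].
  by exists (Qn (y *m dvd_lin_basis int d)); rewrite qform_dvd_lin_form_zvec.
by rewrite qform_dvd_lin_form qform_upper_ones_gt0 ?mul_dvd_lin_basis_eq0.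
Qed.

Local Open Scope classical_set_scope.

Lemma dvd_lin_basis_bij (R : realType) d m : (0 < d)%N ->
  set_bij [set y : 'rV[int]_M | qform (dvd_lin_form R d) (zvec R y) = m%:R]
    ([set k | Qn k = m%:Z] `&` [set k | (d%:Z %| lin_n k)%Z])
    (fun y => y *m dvd_lin_basis int d).
Proof.
move=> d_gt0; split.
- move=> y /=; rewrite qform_dvd_lin_form_zvec -[m%:R]/((m%:Z)%:~R : R) => /intr_inj Qy.
  by split=> //=; rewrite lin_n_mul_dvd_lin_basis dvdz_mulr.
- move=> y1 y2 _ _ /= /eqP; rewrite -subr_eq0 -mulmxBl.
  by rewrite mul_dvd_lin_basis_eq0 // subr_eq0 => /eqP.
move=> k [/= Qk d_lin].
pose y := \row_j if j == ord0 then (lin_n k %/ d%:Z)%Z else k 0 j.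
have yB : y *m dvd_lin_basis int d = k.
  apply/matrixP => a j; rewrite (ord1 a) mul_dvd_lin_basisE !mxE.
  case: eqP => [-> | _] //; rewrite natz [_ * (_ %/ _)%Z]mulrC divzK // lin_nE.
  by under [X in _ - X]eq_bigr => i i0 do rewrite mxE (negbTE i0); rewrite addrK.
by exists y; rewrite //= qform_dvd_lin_form_zvec yB Qk.
Qed.

Lemma thetaQ_coef_dvd_lin_form (R : realType) d m : (0 < d)%N ->
  thetaQ_coef (dvd_lin_form R d) m =
  \sum_(k \in [set k : 'rV[int]_M | Qn k = m%:Z])
     if (d%:Z %| lin_n k)%Z then (1 : R[i]) else 0.
Proof.
move=> d_gt0; rewrite /thetaQ_coef.
rewrite -(reindex_fsbig _ _ _ (fun _ => (1 : R[i])) (dvd_lin_basis_bij R m d_gt0)).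
rewrite fsbig_mkcondr; apply: eq_fsbigr => k _.
case: ifPn => [/set_mem -> // | k_notB]; case: ifPn => // d_lin.
by rewrite mem_set in k_notB.
Qed.

End DvdLinSublattice.

Lemma totient_sum_coprime N : totient N = (\sum_(u < N | coprime u N) 1)%N.
Proof.
rewrite totient_count_coprime big_mkord [RHS]big_mkcond /=.
by apply: eq_bigr => u _; rewrite coprime_sym; case: coprime.
Qed.

Lemma totient_thetan_coef (R : realType) n m :
  (totient n.+3)%:R * thetan_coef R n.+1 m =
  \sum_(i < n.+3 | (i.+1 %| n.+3)%N) (moebius i.+1)%:~R * (n.+3 %/ i.+1)%:R *
     thetaQ_coef (dvd_lin_form n R (n.+3 %/ i.+1)) m.
Proof.
have level_fin := finite_Qn_level n.+1 m.
have z_prim := zeta_prim_root R n.+1.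
rewrite totient_sum_coprime natr_sum mulr_suml.
under eq_bigr => u u_coprime.
  rewrite mul1r /thetan_coef -(sum_Qn_level_exprz_mul m z_prim u_coprime) fsbig_finite //=.
  over.
rewrite exchange_big /=.
under eq_bigr do rewrite (ramanujan_sum z_prim).
rewrite exchange_big /=; apply: eq_bigr => i i_dvdN.
have d_gt0 : (0 < n.+3 %/ i.+1)%N by rewrite divn_gt0 // dvdn_leq.
rewrite thetaQ_coef_dvd_lin_form // fsbig_finite //= mulr_sumr.
by apply: eq_bigr => k _; case: ifP; rewrite ?mulr1 ?mulr0.
Qed.

Theorem proposition3p1 (R : realType) (n : nat) : (1 <= n)%N ->
  exists N : nat, (1 <= N)%N /\
  exists (a : 'I_N -> rat) (A : 'I_N -> 'M[R]_n),
    (forall i, int_valued_posdef (A i)) /\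
    forall m : nat,
      thetan_coef R n m = \sum_(i < N) (ratr (a i) : R[i]) * thetaQ_coef (A i) m.
Proof.
case: n => [|n] // _; exists n.+3; split => //.
pose a (i : 'I_n.+3) : rat := if (i.+1 %| n.+3)%N
  then (moebius i.+1)%:~R * (n.+3 %/ i.+1)%:R / (totient n.+3)%:R else 0.
exists a, (fun i => dvd_lin_form n R (n.+3 %/ i.+1)); split=> [i | m].
  by apply: dvd_lin_form_posdef; rewrite divn_gt0 // ltn_ord.
have phi_neq0 : (totient n.+3)%:R != 0 :> R[i] by rewrite pnatr_eq0 -lt0n totient_gt0.
apply: (mulfI phi_neq0); rewrite totient_thetan_coef mulr_sumr [LHS]big_mkcond /=.
apply: eq_bigr => i _; rewrite /a; case: ifP => _; last by rewrite rmorph0 mul0r mulr0.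
rewrite !rmorphM /= fmorphV /= rmorph_int !rmorph_nat.
by rewrite mulrA mulrCA divff // mulr1.
Qed.
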